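(* Let $\psi\colon\mathbb R^d\to\mathbb R\cup\{+\infty\}$ be a lower semi-continuous convex function with $u\in\operatorname{dom}\psi$. Set $f=e^{-\psi}$ and $\bar u=(u,f(u))$. Let $\bar v=(v,\nu)\in\mathbb R^d\times\mathbb R$ with $\nu\ne0$. Then the following are equivalent: (1) $\bar v\in N_{\mathrm{lift}(f)}(\bar u)$ and $\langle\bar u,\bar v\rangle=1$; (2) there is $p\in\partial\psi(u)$ with $1+\langle p,u\rangle>0$ and $\bar v=\dfrac{(p,1/f(u))}{1+\langle p,u\rangle}$.
   Context: $\operatorname{dom}\psi=\{x:\psi(x)<\infty\}$; $\partial\psi(u)=\{p:\psi(y)\ge\psi(u)+\langle p,y-u\rangle\ \forall y\}$. $\operatorname{supp}f=\{x:f(x)>0\}$. Lifting $\mathrm{lift}(f)=\{(x,y)\in\mathbb R^d\times\mathbb R:x\in\overline{\operatorname{supp}f},|y|\le f(x)\}$. Fréchet normal cone $N_A(a_0)=\{w:\forall\varepsilon>0\,\exists\delta>0:\langle w,a-a_0\rangle\le\varepsilon|a-a_0|\ \forall a\in A,|a-a_0|\le\delta\}$. *)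

From HB Require Import structures.
From mathcomp Require Import all_boot all_order all_algebra.
From mathcomp Require Import all_classical all_reals all_analysis.
Set Implicit Arguments. Unset Strict Implicit. Unset Printing Implicit Defensive.
Import Order.TTheory GRing.Theory Num.Theory.
Import numFieldNormedType.Exports.
Local Open Scope classical_set_scope.
Local Open Scope ring_scope.

Section Defs.
Variables (R : realType) (d : nat).

Definition dotv (x y : 'rV[R]_d) : R := \sum_(i < d) x 0 i * y 0 i.

Definition dotp (a b : 'rV[R]_d * R) : R := dotv a.1 b.1 + a.2 * b.2.
Definition normp (a : 'rV[R]_d * R) : R := Num.sqrt (dotp a a).
Definition subp (a b : 'rV[R]_d * R) : 'rV[R]_d * R := (a.1 - b.1, a.2 - b.2).

Definition edom (psi : 'rV[R]_d -> \bar R) : set 'rV[R]_d :=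
  [set x | (psi x < +oo)%E].

Definition convex_ext (psi : 'rV[R]_d -> \bar R) : Prop :=
  forall (x y : 'rV[R]_d) (t : R), 0 < t < 1 ->
    (psi (t *: x + (1 - t) *: y)%R <= t%:E * psi x + (1 - t)%:E * psi y)%E.

Definition subdiff (psi : 'rV[R]_d -> \bar R) (u : 'rV[R]_d) : set 'rV[R]_d :=
  [set p | forall y, (psi u + (dotv p (y - u))%:E <= psi y)%E].

Definition expneg (psi : 'rV[R]_d -> \bar R) (x : 'rV[R]_d) : R :=
  match psi x with
  | EFin r => expR (- r)
  | +oo%E => 0
  | -oo%E => 0 (* never used: psi does not take the value -oo *)
  end.

Definition supp (f : 'rV[R]_d -> R) : set 'rV[R]_d := [set x | 0 < f x].

Definition liftf (f : 'rV[R]_d -> R) : set ('rV[R]_d * R) :=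
  [set a | closure (supp f) a.1 /\ `|a.2| <= f a.1].

Definition frechet_normal (A : set ('rV[R]_d * R)) (a0 : 'rV[R]_d * R)
  : set ('rV[R]_d * R) :=
  [set w | forall eps : R, 0 < eps -> exists2 delta : R, 0 < delta &
     forall a, A a -> normp (subp a a0) <= delta ->
       dotp w (subp a a0) <= eps * normp (subp a a0)].

End Defs.

From mathcomp Require Import all_boot all_order all_algebra.
From mathcomp Require Import all_classical all_reals all_analysis.
From mathcomp Require Import ring lra.
Set Implicit Arguments. Unset Strict Implicit. Unset Printing Implicit Defensive.
Import Order.TTheory GRing.Theory Num.Theory.
Import numFieldNormedType.Exports.
Local Open Scope classical_set_scope.
Local Open Scope ring_scope.

(* Write f = e^{-psi} and c = 1 + <p, u>.  If p is a subgradient at u then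
   f(x) <= f(u) e^{-<p, x - u>}, so for (x, y) in the lift the Frechet quotient
   of (p, 1/f(u)) is at most <p,h> + e^{-<p,h>} - 1 = O(|h|^2); rescaling by 1/c
   makes the inner product with (u, f(u)) equal to 1.  Conversely the lift
   contains the vertical segment below (u, f(u)), which forces nu >= 0, and by
   convexity it contains the points (u + t(y - u), f(u) e^{-t(psi y - psi u)});
   testing the normal inequality there and letting t -> 0 shows that
   v / (nu f(u)) is a subgradient, and <(u, f(u)), (v, nu)> = 1 identifies
   1 + <p, u> with 1 / (nu f(u)). *)

Section Euclid.
Variables (R : realType) (d : nat).
Implicit Types (a b h p : 'rV[R]_d) (k s : R).

Lemma dotvC a b : dotv a b = dotv b a.
Proof. by apply: eq_bigr => i _; rewrite mulrC. Qed.

Lemma dotvZl k a b : dotv (k *: a) b = k * dotv a b.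
Proof. by rewrite /dotv mulr_sumr; apply: eq_bigr => i _; rewrite mxE mulrA. Qed.

Lemma dotv0r a : dotv a 0 = 0.
Proof. by rewrite /dotv big1 // => i _; rewrite mxE mulr0. Qed.

Lemma dotv_ge0 a : 0 <= dotv a a.
Proof. by apply: sumr_ge0 => i _; rewrite -expr2 sqr_ge0. Qed.

Definition normv a := Num.sqrt (dotv a a).

Lemma normv_ge0 a : 0 <= normv a.
Proof. exact: sqrtr_ge0. Qed.

Lemma normvZ k a : 0 <= k -> normv (k *: a) = k * normv a.
Proof.
move=> k0; rewrite /normv dotvZl dotvC dotvZl mulrA sqrtrM ?mulr_ge0 //.
by rewrite -expr2 sqrtr_sqr ger0_norm.
Qed.

Lemma abs_coord_le_normv a i : `|a 0 i| <= normv a.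
Proof.
rewrite /normv -sqrtr_sqr ler_wsqrtr // /dotv (bigD1 i) //= expr2 lerDl.
by apply: sumr_ge0 => j _; rewrite -expr2 sqr_ge0.
Qed.

Lemma abs_dotv_le p h : `|dotv p h| <= (\sum_(i < d) `|p 0 i|) * normv h.
Proof.
rewrite /dotv mulr_suml; apply: le_trans (ler_norm_sum _ _ _) _.
by apply: ler_sum => i _; rewrite normrM ler_wpM2l ?abs_coord_le_normv.
Qed.

Lemma normpE h s : normp (h, s) = Num.sqrt (normv h ^+ 2 + s ^+ 2).
Proof. by rewrite /normp /dotp /= sqr_sqrtr ?dotv_ge0 // expr2. Qed.

Lemma normv_le_normp h s : normv h <= normp (h, s).
Proof.
by rewrite normpE -[leLHS]ger0_norm ?normv_ge0 // -sqrtr_sqr ler_wsqrtr // lerDl sqr_ge0.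
Qed.

Lemma normp_le h s : normp (h, s) <= normv h + `|s|.
Proof.
rewrite normpE -[leRHS]ger0_norm ?addr_ge0 ?normv_ge0 // -sqrtr_sqr ler_wsqrtr //.
rewrite sqrrD -(real_normK (num_real s)) lerD2r lerDl.
by rewrite mulrn_wge0 ?mulr_ge0 ?normv_ge0.
Qed.

Lemma dotp_scale k h s w : dotp (k *: h, k * s) w = k * dotp (h, s) w.
Proof. by rewrite /dotp /= dotvZl mulrDr mulrA. Qed.

End Euclid.

Section ExpBounds.
Variable R : realType.
Implicit Types s : R.

Lemma expRN_le_inv s : -1 < s -> expR (- s) <= (1 + s)^-1.
Proof.
by move=> s1; rewrite expRN lef_pV2 ?posrE ?expR_gt0 ?expR_ge1Dx //; lra.
Qed.

Lemma expRN_sub1_le s : `|s| <= 2^-1 -> expR (- s) - 1 + s <= 2 * s ^+ 2.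
Proof.
rewrite ler_norml => /andP[s_lb s_ub].
have s1_gt0 : 0 < 1 + s by lra.
have := @expRN_le_inv s ltac:(lra).
have inv_s1 : (1 + s)^-1 * (1 + s) = 1 by rewrite mulVf ?gt_eqF.
have := invr_gt0 (1 + s); rewrite s1_gt0.
nra.
Qed.

Lemma abs_expRN_sub1_le s : `|s| <= 2^-1 -> `|expR (- s) - 1| <= 2 * `|s|.
Proof.
move=> s_small; have := expRN_sub1_le s_small; have := expR_ge1Dx (- s).
have := ler_norm s; have : - s <= `|s| by rewrite -normrN ler_norm.
have : 2 * s ^+ 2 <= `|s| by rewrite -real_normK ?num_real //; have := normr_ge0 s; nra.
by rewrite ler_norml; move=> *; apply/andP; split; lra.
Qed.

End ExpBounds.

Section FrechetNormal.
Variables (R : realType) (d : nat).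

Lemma liftf_mem (f : 'rV[R]_d -> R) x y : 0 < f x -> `|y| <= f x -> liftf f (x, y).
Proof. by move=> fx_gt0 y_le; split=> //=; apply: subset_closure. Qed.

Lemma frechet_normalZ (A : set ('rV[R]_d * R)) a0 h s (k : R) :
  0 < k -> frechet_normal A a0 (h, s) -> frechet_normal A a0 (k *: h, k * s).
Proof.
move=> k_gt0 hN eps eps_gt0; have [del del_gt0 hdel] := hN _ (divr_gt0 eps_gt0 k_gt0).
exists del => // a Aa a_near; rewrite dotp_scale.
have -> : eps = k * (eps / k) by rewrite mulrCA mulfV ?gt_eqF ?mulr1.
by rewrite -mulrA ler_pM2l //; apply: hdel.
Qed.

Lemma frechet_normal_liftf_ge0 (f : 'rV[R]_d -> R) u v nu :
  0 < f u -> frechet_normal (liftf f) (u, f u) (v, nu) -> 0 <= nu.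
Proof.
move=> fu_gt0 hN; rewrite leNgt; apply/negP => nu_lt0.
have [del del_gt0 hdel] := hN (- nu / 2) ltac:(lra).
pose s := Num.min del (f u).
have s_gt0 : 0 < s by rewrite lt_min del_gt0 fu_gt0.
have [s_le_del s_le_fu] : s <= del /\ s <= f u by split; rewrite ge_min lexx ?orbT.
have dist_s : normp (subp (u, f u - s) (u, f u)) = s.
  by rewrite /subp /= subrr addrAC subrr add0r normpE /normv dotv0r sqrtr0
    expr0n /= add0r sqrtr_sqr normrN gtr0_norm.
have mem : liftf f (u, f u - s) by apply: liftf_mem => //; rewrite ger0_norm; lra.
have := hdel _ mem; rewrite dist_s => /(_ s_le_del).
rewrite /subp /dotp /= subrr dotv0r add0r addrAC subrr add0r.
nra.
Qed.

End FrechetNormal.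

Section SubdiffNormal.
Variables (R : realType) (d : nat) (psi : 'rV[R]_d -> \bar R) (u : 'rV[R]_d) (r : R).
Hypothesis psi_u : psi u = r%:E.

Lemma expneg_fin x rx : psi x = rx%:E -> expneg psi x = expR (- rx).
Proof. by rewrite /expneg => ->. Qed.

Lemma expneg_u_gt0 : 0 < expneg psi u.
Proof. by rewrite (expneg_fin psi_u) expR_gt0. Qed.

Lemma expneg_le_subdiff p x :
  subdiff psi u p -> expneg psi x <= expneg psi u * expR (- dotv p (x - u)).
Proof.
move=> p_sub; rewrite (expneg_fin psi_u) -expRD.
have := p_sub x; rewrite psi_u /expneg.
case: (psi x) => [rx | | ] //=.
by rewrite -EFinD lee_fin ler_expR => ?; lra.
Qed.

Lemma subdiff_frechet_normal_liftf p : subdiff psi u p ->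
  frechet_normal (liftf (expneg psi)) (u, expneg psi u) (p, (expneg psi u)^-1).
Proof.
move=> p_sub eps eps_gt0; set fu := expneg psi u.
have fu_gt0 : 0 < fu := expneg_u_gt0.
set K : R := \sum_(i < d) `|p 0 i|.
have K_ge0 : 0 <= K by apply: sumr_ge0.
have K2_gt0 : 0 < 2 * K ^+ 2 + 1 by rewrite ltr_pwDr ?mulr_ge0 ?sqr_ge0.
exists (Num.min (2 * (K + 1))^-1 (eps / (2 * K ^+ 2 + 1))).
  by rewrite lt_min invr_gt0 divr_gt0 ?mulr_gt0 //; lra.
move=> [x y] [_ /= y_le]; rewrite /subp /= le_min -div1r.
rewrite !ler_pdivlMr ?mulr_gt0 //; last lra.
move=> /andP[N_le1 N_le2].
set h := x - u in N_le1 N_le2 *; set N := normp (h, y - fu) in N_le1 N_le2 *.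
set t := dotv p h.
have N_ge0 : 0 <= N by apply: sqrtr_ge0.
have t_le : `|t| <= K * N.
  by apply: le_trans (abs_dotv_le p h) _; rewrite ler_wpM2l ?normv_le_normp.
have t_small : `|t| <= 2^-1 by nra.
have t_sqr : t ^+ 2 <= K ^+ 2 * N ^+ 2.
  by rewrite -exprMn -real_normK ?num_real // lerXn2r ?nnegrE ?mulr_ge0.
have y_le_exp : y <= fu * expR (- t).
  by apply: le_trans (ler_norm y) (le_trans y_le _); apply: expneg_le_subdiff.
have exp_quad := expRN_sub1_le t_small.
have : fu^-1 * (y - fu) <= expR (- t) - 1.
  by rewrite -(ler_pM2l fu_gt0) mulrA mulfV ?gt_eqF // mul1r; lra.
rewrite /dotp /= -/t; nra.
Qed.

End SubdiffNormal.

Lemma exists_small_step (R : realFieldType) (del a b : R) :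
  0 < del -> 0 <= a -> 0 <= b -> exists2 t, 0 < t < 1 & t * a <= del /\ t * b <= 1.
Proof.
move=> del_gt0 a_ge0 b_ge0; set m := Num.min del 1.
have m_gt0 : 0 < m by rewrite lt_min del_gt0 ltr01.
have [m_le_del m_le1] : m <= del /\ m <= 1 by split; rewrite ge_min lexx ?orbT.
have ab1_gt0 : 0 < a + b + 1 by lra.
set t := Num.min 2^-1 (m / (a + b + 1)).
have t_le : t <= m / (a + b + 1) by rewrite ge_min lexx orbT.
have t_gt0 : 0 < t by rewrite lt_min divr_gt0 // andbT; lra.
have t_le_half : t <= 2^-1 by rewrite ge_min lexx.
move: t_le; rewrite ler_pdivlMr // => t_le.
exists t; first by apply/andP; split; lra.
by split; nra.
Qed.

Lemma normp_step_le (R : realType) (d : nat) (w : 'rV[R]_d) (c s t : R) :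
  0 <= c -> 0 <= t -> `|s| <= 2^-1 ->
  normp (t *: w, c * expR (- s) - c) <= t * normv w + 2 * c * `|s|.
Proof.
move=> c_ge0 t_ge0 s_small; apply: le_trans (normp_le _ _) _.
rewrite normvZ // lerD2l -{2}[c]mulr1 -mulrBr normrM ger0_norm //.
by rewrite -mulrA mulrCA ler_wpM2l // abs_expRN_sub1_le.
Qed.

Section ConvexLift.
Variables (R : realType) (d : nat) (psi : 'rV[R]_d -> \bar R) (u : 'rV[R]_d) (r : R).
Hypotheses (psi_ninf : forall x, psi x != -oo%E) (psi_convex : convex_ext psi).
Hypothesis psi_u : psi u = r%:E.

Lemma expneg_convex_segment y ry t : psi y = ry%:E -> 0 < t < 1 ->
  expneg psi u * expR (- (t * (ry - r))) <= expneg psi (t *: y + (1 - t) *: u).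
Proof.
move=> psi_y t01; have := psi_convex y u t01.
rewrite psi_u psi_y -!EFinM -EFinD (expneg_fin psi_u) -expRD.
case psi_x: (psi _) => [z | | ]; last by have := psi_ninf (t *: y + (1 - t) *: u); rewrite psi_x.
- by rewrite (expneg_fin psi_x) lee_fin ler_expR => ?; nra.
- by rewrite leNgt ltry.
Qed.

Lemma frechet_normal_liftf_slope v (nu : R) y ry : 0 < nu ->
  frechet_normal (liftf (expneg psi)) (u, expneg psi u) (v, nu) -> psi y = ry%:E ->
  dotv v (y - u) <= nu * expneg psi u * (ry - r).
Proof.
move=> nu_gt0 hN psi_y; set fu := expneg psi u; set w := y - u; set dl := ry - r.
have fu_gt0 : 0 < fu := expneg_u_gt0 psi_u.
set C := normv w + 2 * fu * `|dl|.
have C_ge0 : 0 <= C by rewrite addr_ge0 ?normv_ge0 ?mulr_ge0 // ltW.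
suff slope_eps : forall eps, 0 < eps -> dotv v w <= nu * fu * dl + eps * C.
  apply/ler_addgt0Pr => e e_gt0; apply: le_trans (slope_eps (e / (C + 1)) _) _.
    by rewrite divr_gt0 //; lra.
  rewrite lerD2l mulrAC ler_pdivrMr; last lra.
  by rewrite ler_pM2l // lerDl.
(* Test the normal inequality at the point of the lift above u + t w at height
   f(u) e^{-t dl}, which is below f there by convexity. *)
move=> eps eps_gt0; have [del del_gt0 hdel] := hN eps eps_gt0.
have dl2_ge0 : 0 <= 2 * `|dl| by rewrite mulr_ge0.
have [t /andP[t_gt0 t_lt1] [tC_le tdl_le]] := exists_small_step del_gt0 C_ge0 dl2_ge0.
have tdl_small : `|t * dl| <= 2^-1.
  by rewrite normrM (ger0_norm (ltW t_gt0)); nra.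
set x := t *: y + (1 - t) *: u; set E := expR (- (t * dl)).
have x_step : x - u = t *: w.
  by rewrite /x /w scalerBl scale1r scalerBr addrCA addrC addrK.
have fuE_le : fu * E <= expneg psi x by apply: expneg_convex_segment => //; lra.
have fuE_gt0 : 0 < fu * E by rewrite mulr_gt0 ?expR_gt0.
have mem : liftf (expneg psi) (x, fu * E).
  by apply: liftf_mem; [lra | rewrite gtr0_norm].
have dist_le : normp (subp (x, fu * E) (u, fu)) <= t * C.
  rewrite /subp /= x_step.
  apply: le_trans (normp_step_le _ (ltW fu_gt0) (ltW t_gt0) tdl_small) _.
  by rewrite normrM (ger0_norm (ltW t_gt0)) /C; nra.
have := hdel _ mem (le_trans dist_le tC_le).
rewrite /subp /dotp /= -/fu x_step dotvC dotvZl dotvC => normal_ineq.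
move: dist_le; rewrite /subp /= x_step => dist_le.
have E_ge : 1 - t * dl <= E by apply: expR_ge1Dx.
have nu_step : - (t * (nu * fu * dl)) <= nu * (fu * E - fu).
  have E_gap : 0 <= E - (1 - t * dl) by rewrite subr_ge0.
  have := mulr_ge0 (ltW (mulr_gt0 nu_gt0 fu_gt0)) E_gap; nra.
have eps_step : eps * normp (t *: w, fu * E - fu) <= t * (eps * C).
  by rewrite mulrCA ler_pM2l.
by rewrite -(ler_pM2l t_gt0) mulrDr; lra.
Qed.

Lemma frechet_normal_liftf_subdiff v (nu : R) : 0 < nu ->
  frechet_normal (liftf (expneg psi)) (u, expneg psi u) (v, nu) ->
  subdiff psi u ((nu * expneg psi u)^-1 *: v).
Proof.
move=> nu_gt0 hN y; rewrite dotvZl psi_u.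
case psi_y: (psi y) => [ry | | ].
- have k_gt0 : 0 < nu * expneg psi u by rewrite mulr_gt0 ?(expneg_u_gt0 psi_u).
  have : (nu * expneg psi u)^-1 * dotv v (y - u) <= ry - r.
    by rewrite ler_pdivrMl //; apply: frechet_normal_liftf_slope.
  by rewrite -EFinD lee_fin => ?; lra.
- by rewrite leey.
- by have := psi_ninf y; rewrite psi_y.
Qed.

End ConvexLift.

Lemma edom_fin (R : realType) (d : nat) (psi : 'rV[R]_d -> \bar R) u :
  psi u != -oo%E -> edom psi u -> exists r, psi u = r%:E.
Proof. by rewrite /edom /=; case: (psi u) => [r _ _ | // | //]; exists r. Qed.

Theorem mainTheorem8 (R : realType) (d : nat) (psi : 'rV[R]_d -> \bar R)
  (u v : 'rV[R]_d) (nu : R) :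
  (forall x, psi x != -oo%E) ->
  lower_semicontinuous psi ->
  convex_ext psi ->
  edom psi u ->
  nu != 0 ->
  ((frechet_normal (liftf (expneg psi)) (u, expneg psi u) (v, nu) /\
    dotp (u, expneg psi u) (v, nu) = 1)
   <->
   (exists p, subdiff psi u p /\ 0 < 1 + dotv p u /\
      (v, nu) = ((1 + dotv p u)^-1 *: p,
                 (expneg psi u)^-1 / (1 + dotv p u)))).
Proof.
move=> psi_ninf _ psi_convex u_dom nu_neq0.
have [r psi_u] := edom_fin (psi_ninf u) u_dom.
have fu_gt0 := expneg_u_gt0 psi_u; set fu := expneg psi u in fu_gt0 *.
split=> [[v_normal uv_dot] | [p [p_sub [c_gt0 ->]]]].
- have nu_gt0 : 0 < nu.
    by rewrite lt_def nu_neq0 (frechet_normal_liftf_ge0 fu_gt0 v_normal).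
  have k_gt0 : 0 < nu * fu by rewrite mulr_gt0.
  have c_eq : 1 + dotv ((nu * fu)^-1 *: v) u = (nu * fu)^-1.
    rewrite dotvZl.
    have -> : dotv v u = 1 - nu * fu by move: uv_dot; rewrite /dotp /= dotvC; lra.
    by rewrite mulrBr mulr1 mulVf ?gt_eqF // addrC subrK.
  exists ((nu * fu)^-1 *: v); rewrite c_eq invrK; split; last split.
  + by have := frechet_normal_liftf_subdiff psi_ninf psi_convex psi_u nu_gt0 v_normal.
  + by rewrite invr_gt0.
  + rewrite scalerA mulfV ?gt_eqF // scale1r; congr pair.
    by rewrite mulrCA mulVf ?gt_eqF ?mulr1.
- split.
  + rewrite mulrC; apply: frechet_normalZ; first by rewrite invr_gt0.
    by have := subdiff_frechet_normal_liftf psi_u p_sub.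
  + rewrite /dotp /= dotvC dotvZl mulrA mulfV ?gt_eqF // mul1r.
    by field; rewrite gt_eqF.
Qed.
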